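(* Let $a:\mathbb{Z}\curvearrowright X$ be a free Borel action of $\mathbb{Z}$ on a standard Borel space $X$, and let $S=\{1,-1\}$. Suppose $V\subseteq X$ is a Borel set such that every injective $G(a,S)$-ray contains infinitely many edges with both endpoints in $V$. Then there is a Borel edge coloring of $G(a,S)$ with colors $\{1,2,3\}$ such that the color $3$ is used only on edges with both endpoints in $V$.
   Context: $G(a,S)$ is the graph on $X$ with $x,y$ adjacent iff $y=x+1$ or $y=x-1$ under the action. An injective $G$-ray is an injective sequence $x_0,x_1,\dots$ with each $(x_i,x_{i+1})$ an edge. An edge coloring gives distinct colors to edges sharing a vertex. *)

From HB Require Import structures.
From mathcomp Require Import all_boot all_order all_algebra.
From mathcomp Require Import all_classical all_reals all_analysis.
From mathcomp Require Import Rstruct Rstruct_topology.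
Set Implicit Arguments. Unset Strict Implicit. Unset Printing Implicit Defensive.
Import Order.TTheory GRing.Theory Num.Theory.
Local Open Scope classical_set_scope.
Local Open Scope ring_scope.

Definition is_metric (X : Type) (d : X -> X -> Rdefinitions.R) : Prop :=
  (forall x y, 0 <= d x y) /\ (forall x y, d x y = 0 <-> x = y) /\
  (forall x y, d x y = d y x) /\ (forall x y z, d x z <= d x y + d y z).

Definition metric_compatible (X : topologicalType) (d : X -> X -> Rdefinitions.R) : Prop :=
  forall U : set X, open U <->
    (forall x, U x -> exists e : Rdefinitions.R, 0 < e /\ forall y, d x y < e -> U y).

Definition metric_complete (X : Type) (d : X -> X -> Rdefinitions.R) : Prop :=
  forall u : nat -> X,
    (forall e : Rdefinitions.R, 0 < e -> exists N, forall m n, (N <= m)%N -> (N <= n)%N -> d (u m) (u n) < e) ->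
    exists l, forall e : Rdefinitions.R, 0 < e -> exists N, forall n, (N <= n)%N -> d (u n) l < e.

Definition polish (X : topologicalType) : Prop :=
  (exists D : set X, countable D /\ closure D = setT) /\
  (exists d : X -> X -> Rdefinitions.R, is_metric d /\ metric_compatible d /\ metric_complete d).

Definition Borel (X : topologicalType) (A : set X) : Prop :=
  smallest (sigma_algebra setT) (@open X) A.

Definition Borel2 (X : topologicalType) (A : set (X * X)) : Prop :=
  smallest (sigma_algebra setT)
    [set C | exists B1 B2 : set X, Borel B1 /\ Borel B2 /\ C = B1 `*` B2] A.

Definition Borel_map (X : topologicalType) (f : X -> X) : Prop :=
  forall A : set X, Borel A -> Borel (f @^-1` A).

Definition free_Borel_Z_action (X : topologicalType) (a : int -> X -> X) : Prop :=
  (forall x, a 0 x = x) /\ (forall m n x, a (m + n) x = a m (a n x)) /\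
  (forall n, Borel_map (a n)) /\ (forall n x, a n x = x -> n = 0).

Definition Gadj (X : Type) (a : int -> X -> X) (x y : X) : Prop :=
  y = a 1 x \/ y = a (-1) x.

Definition injective_ray (X : Type) (a : int -> X -> X) (r : nat -> X) : Prop :=
  injective r /\ forall i, Gadj a (r i) (r i.+1).

Definition edge_coloring (X : Type) (a : int -> X -> X) (K : set nat)
    (c : X -> X -> nat) : Prop :=
  (forall x y, Gadj a x y -> c x y = c y x) /\
  (forall x y, Gadj a x y -> K (c x y)) /\
  (forall x y z, Gadj a x y -> Gadj a x z -> y <> z -> c x y <> c x z).

Definition Borel_edge_coloring (X : topologicalType) (a : int -> X -> X)
    (c : X -> X -> nat) : Prop :=
  forall k : nat, Borel2 [set p : X * X | Gadj a p.1 p.2 /\ c p.1 p.2 = k].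

(* Identify the edge {x, a 1 x} with the vertex x: an edge colouring is then a
   colouring col of X with col x <> col (a 1 x), and the edges inside V form the
   set W = V `&` a 1 @^-1` V.  A countable Borel family separating each point
   from its two neighbours colours the line properly with countably many Borel
   colours; running the greedy algorithm along these colours gives a Borel
   maximal independent subset M of W.  Colour M with 3 and every other point by
   the parity of its distance back to M.  This distance is finite because every
   backward ray meets W and hence M; it grows by one from x to a 1 x when both
   points lie outside M, and M contains no two consecutive points. *)

From HB Require Import structures.
From mathcomp Require Import all_boot all_order all_algebra.
From mathcomp Require Import all_classical all_reals all_analysis.
From mathcomp Require Import lra Rstruct.
Set Implicit Arguments.
Unset Strict Implicit.
Unset Printing Implicit Defensive.

Import Order.TTheory GRing.Theory Num.Theory.
Local Open Scope classical_set_scope.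
Local Open Scope ring_scope.

Section generated_sigma_algebra.
Context {T : Type} {G : set (set T)}.
Implicit Types (A B : set T) (F : (set T)^nat).

Lemma sigma_setC A : <<s G >> A -> <<s G >> (~` A).
Proof. by move=> GA; rewrite -setTD; exact: sigma_algebraCD. Qed.

Lemma sigma_setT : <<s G >> setT.
Proof. by have := sigma_setC (@sigma_algebra0 _ setT G); rewrite setC0. Qed.

Lemma sigma_bigcap F : (forall n, <<s G >> (F n)) -> <<s G >> (\bigcap_n F n).
Proof.
move=> GF; rewrite -(setCK (\bigcap_n F n)) setC_bigcap.
apply: sigma_setC; apply: (@sigma_algebra_bigcup _ setT G) => n.
exact: sigma_setC.
Qed.

Lemma sigma_bigcup_in (P : set nat) F :
  (forall n, P n -> <<s G >> (F n)) -> <<s G >> (\bigcup_(n in P) F n).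
Proof.
move=> GF; rewrite bigcup_mkcond; apply: (@sigma_algebra_bigcup _ setT G) => n.
by case: ifPn => [/set_mem/GF //|_]; exact: (@sigma_algebra0 _ setT G).
Qed.

Lemma sigma_bigcap_in (P : set nat) F :
  (forall n, P n -> <<s G >> (F n)) -> <<s G >> (\bigcap_(n in P) F n).
Proof.
move=> GF; rewrite bigcap_mkcond; apply: sigma_bigcap => n.
by case: ifPn => [/set_mem/GF //|_]; exact: sigma_setT.
Qed.

Lemma sigma_setU A B : <<s G >> A -> <<s G >> B -> <<s G >> (A `|` B).
Proof.
move=> GA GB; rewrite -bigcup2E; apply: (@sigma_algebra_bigcup _ setT G) => -[|[|n]] //=.
exact: (@sigma_algebra0 _ setT G).
Qed.

Lemma sigma_setI A B : <<s G >> A -> <<s G >> B -> <<s G >> (A `&` B).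
Proof.
move=> GA GB; rewrite -bigcap2E; apply: sigma_bigcap => -[|[|n]] //=.
exact: sigma_setT.
Qed.

Lemma sigma_preimage_cst (n k : nat) : <<s G >> ((fun=> n) @^-1` [set k]).
Proof.
have [->|nk] := eqVneq n k; first by rewrite preimage_cst /= mem_set //; exact: sigma_setT.
by rewrite preimage_cst memNset /=; [exact: (@sigma_algebra0 _ setT G)|exact/eqP].
Qed.

Lemma sigma_preimage_if A (f g : T -> nat) k :
  <<s G >> A -> <<s G >> (f @^-1` [set k]) -> <<s G >> (g @^-1` [set k]) ->
  <<s G >> ((fun x => if `[< A x >] then f x else g x) @^-1` [set k]).
Proof.
move=> GA Gf Gg.
rewrite (_ : _ @^-1` _ = (A `&` f @^-1` [set k]) `|` (~` A `&` g @^-1` [set k])).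
  by apply: sigma_setU; apply: sigma_setI => //; exact: sigma_setC.
by apply/seteqP; split => x /=; case: asboolP; tauto.
Qed.

End generated_sigma_algebra.

Section Borel_sets.
Variable X : topologicalType.
Implicit Types (A : set X) (f g : X -> X).

Lemma Borel_map_iter n f : Borel_map f -> Borel_map (iter n f).
Proof. by move=> Bf; elim: n => [//|n IH] A /Bf/IH. Qed.

Lemma Borel2_setX A1 A2 : Borel A1 -> Borel A2 -> Borel2 (A1 `*` A2).
Proof. by move=> BA1 BA2; apply: sub_sigma_algebra; exists A1, A2. Qed.

Lemma Borel2_graph (B : nat -> set X) f g :
  (forall k, Borel (B k)) -> (forall x y, x <> y -> exists k, B k x /\ ~ B k y) ->
  Borel_map f -> Borel_map g -> Borel2 [set p | f p.1 = g p.2].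
Proof.
move=> BB sepB Bf Bg.
(* f x = g y iff no B k contains exactly one of them *)
rewrite (_ : [set p | _] = \bigcap_k ((f @^-1` B k `*` g @^-1` B k) `|`
                             (f @^-1` (~` B k) `*` g @^-1` (~` B k)))).
  apply: sigma_bigcap => k; have BCk : Borel (~` B k) := sigma_setC (BB k).
  by apply: sigma_setU; apply: Borel2_setX; [apply: Bf | apply: Bg | apply: Bf | apply: Bg].
apply/seteqP; split => -[x y] /=.
  move=> fg k _; rewrite /= fg.
  by case: (pselect (B k (g y))); [left|right].
move=> fg; apply: contrapT => /sepB[k [fk gk]].
by case: (fg k I) => -[].
Qed.

Section metric.
Variable d : X -> X -> Rdefinitions.R.
Hypotheses (d_metric : is_metric d) (d_compatible : metric_compatible d).

Lemma open_metric_ball c r : open [set y | d c y < r].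
Proof.
have [_ [_ [_ dtri]]] := d_metric.
apply/d_compatible => x /= xr; exists (r - d c x); rewrite subr_gt0; split => // y.
by have := dtri c x y; lra.
Qed.

Lemma separable_metric_basis : (exists D : set X, countable D /\ closure D = setT) ->
  exists B : nat -> set X, (forall k, Borel (B k)) /\
    forall x (e : Rdefinitions.R), 0 < e -> exists k, B k x /\ forall y, B k y -> d x y < e.
Proof.
have [d_ge0 [d_eq0 [dC dtri]]] := d_metric.
move=> [D [/pfcard_geP[D0|/surjfunPex[u Du]] clD]].
  exists (fun=> set0); split => [k|x]; first exact: (@sigma_algebra0 _ setT open).
  have : closure D x by rewrite clD.
  by rewrite D0 closure0.
have dense x (r : Rdefinitions.R) : 0 < r -> exists n, d (u n) x < r.
  move=> r0; have : closure D x by rewrite clD.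
  case/(_ [set y | d x y < r]).
    apply: open_nbhs_nbhs; split; first exact: open_metric_ball.
    by rewrite /= (proj2 (d_eq0 x x) erefl).
  move=> z [Dz xz]; rewrite Du in Dz; case: Dz => n _ unz.
  by exists n; rewrite unz dC.
pose B k := if unpickle k is Some (n, m) then [set y | d (u n) y < m.+1%:R^-1]
            else set0.
exists B; split.
  move=> k; rewrite /B; case: unpickle => [[n m]|].
    by apply: sub_sigma_algebra; exact: open_metric_ball.
  exact: (@sigma_algebra0 _ setT open).
move=> x e e0; have [m] : exists m, 0 + m.+1%:R^-1 < e / 2.
  by apply: ltr_add_invr; rewrite divr_gt0.
rewrite add0r => me.
have [n xn] := dense x _ (ltac:(by rewrite invr_gt0) : 0 < m.+1%:R^-1).
exists (pickle (n, m)); rewrite /B pickleK; split => // y /= ny.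
set r := m.+1%:R^-1 in me xn ny.
by have := dtri x (u n) y; rewrite dC in xn; lra.
Qed.

End metric.

Lemma polish_separating : polish X ->
  exists B : nat -> set X, (forall k, Borel (B k)) /\
    forall x y1 y2, x <> y1 -> x <> y2 -> exists k, [/\ B k x, ~ B k y1 & ~ B k y2].
Proof.
move=> [sepX [d [d_metric [d_compatible _]]]].
have [B [BB Bsmall]] := @separable_metric_basis d d_metric d_compatible sepX.
have [d_ge0 [d_eq0 _]] := d_metric.
exists B; split => // x y1 y2 xy1 xy2.
have dpos y : x <> y -> 0 < d x y.
  by move=> xy; rewrite lt_def d_ge0 andbT; apply/eqP => /d_eq0.
have [k [Bx Bk]] := Bsmall x (Num.min (d x y1) (d x y2))
  ltac:(by rewrite lt_min !dpos).
by exists k; split => // /Bk; rewrite lt_min ltxx ?andbF.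
Qed.

End Borel_sets.

Section maximal_independent_set.
Variables (X : Type) (s t : X -> X) (B : nat -> set X) (W : set X).
Hypotheses (sK : cancel s t) (tK : cancel t s).

Definition separating k : set X := B k `&` ~` (s @^-1` B k) `&` ~` (t @^-1` B k).

Definition least_separating n : set X :=
  separating n `&` \bigcap_(m < n) ~` separating m.

Fixpoint greedy n : set X :=
  if n is m.+1 then
    greedy m `|` (W `&` least_separating m `&` ~` (s @^-1` greedy m)
                   `&` ~` (t @^-1` greedy m))
  else set0.

Definition mis : set X := \bigcup_n greedy n.

Hypothesis separating_exists : forall x, exists k, separating k x.

Lemma least_separating_exists x : exists n, least_separating n x.
Proof.
have [k xk] := separating_exists x.
have ex : exists k, `[< separating k x >] by exists k; exact/asboolP.
case: (ex_minnP ex) => n /asboolP xn n_min; exists n; split => // m /= mn xm.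
by have := n_min m (asboolT xm); rewrite leqNgt mn.
Qed.

Lemma least_separating_neq n x : least_separating n x -> ~ least_separating n (s x).
Proof. by move=> [[[_ nBsx] _] _] [[[Bsx _] _] _]. Qed.

Lemma greedy_mono {m n} : (m <= n)%N -> greedy m `<=` greedy n.
Proof.
move=> /subnK <-; elim: (n - m)%N => [//|k IH] x /IH gx.
by rewrite addSn; left.
Qed.

Lemma greedy_add n x : W x -> least_separating n x ->
  ~ greedy n (s x) -> ~ greedy n (t x) -> greedy n.+1 x.
Proof. by right. Qed.

Lemma misP x : mis x <->
  exists n, [/\ W x, least_separating n x, ~ greedy n (s x) & ~ greedy n (t x)].
Proof.
split=> [[k _]|[n [Wx xn nsx ntx]]]; last by exists n.+1 => //; exact: greedy_add.
by elim: k => [//|k IH] /= [/IH //|[[[Wx xk] nsx] ntx]]; exists k.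
Qed.

Lemma mis_sub : mis `<=` W.
Proof. by move=> x /misP[n []]. Qed.

Lemma mis_indep x : mis x -> ~ mis (s x).
Proof.
move=> /misP[n [Wx xn nsx ntx]] /misP[m [Wsx sxm nssx ntsx]].
have [nm|mn|eq_nm] := ltngtP n m.
- by apply: ntsx; rewrite sK; apply: (greedy_mono nm); exact: greedy_add.
- by apply: nsx; apply: (greedy_mono mn); exact: greedy_add.
- by subst m; exact: least_separating_neq xn sxm.
Qed.

Lemma mis_maximal x : W x -> ~ mis x -> mis (s x) \/ mis (t x).
Proof.
move=> Wx nx; have [n xn] := least_separating_exists x.
case: (pselect (greedy n (s x))) => [gsx|ngsx]; first by left; exists n.
case: (pselect (greedy n (t x))) => [gtx|ngtx]; first by right; exists n.
by case: nx; apply/misP; exists n.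
Qed.

Lemma mis_hits_backward_ray :
  (forall z, exists2 n, (0 < n)%N & W (iter n t z)) ->
  forall z, exists n, mis (iter n t z).
Proof.
move=> W_back z; have [n n0 Wn] := W_back z.
case: (pselect (mis (iter n t z))) => [|nMn]; first by exists n.
case: (mis_maximal Wn nMn) => Mn; last by exists n.+1.
by exists n.-1; move: Mn; rewrite -{1}(prednK n0) /= tK.
Qed.

End maximal_independent_set.

Section parity_colouring.
Variables (X : Type) (s t : X -> X) (M : set X).
Hypotheses (sK : cancel s t) (M_indep : forall x, M x -> ~ M (s x)).
Hypothesis M_hit : forall x, exists n, M (iter n t x).

Definition first_hit n : set X :=
  iter n t @^-1` M `&` \bigcap_(m < n) ~` (iter m t @^-1` M).

Definition odd_first_hit : set X := \bigcup_(n in [set n | odd n]) first_hit n.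

Definition parity_colour x : nat :=
  if `[< M x >] then 3%N else if `[< odd_first_hit x >] then 1%N else 2%N.

Lemma first_hit_exists x : exists n, first_hit n x.
Proof.
have ex : exists n, `[< M (iter n t x) >].
  by have [n Mn] := M_hit x; exists n; exact/asboolP.
case: (ex_minnP ex) => n /asboolP Mn n_min; exists n; split => // m /= mn Mm.
by have := n_min m (asboolT Mm); rewrite leqNgt mn.
Qed.

Lemma first_hit_unique {n m x} : first_hit n x -> first_hit m x -> n = m.
Proof.
move=> [Mn n_min] [Mm m_min].
by have [nm|mn|//] := ltngtP n m; [case: (m_min n nm) | case: (n_min m mn)].
Qed.

Lemma first_hit_succ {n x} : ~ M (s x) -> first_hit n x -> first_hit n.+1 (s x).
Proof.
move=> nMsx [Mn n_min]; split => [|[//|m] /= mn]; rewrite /= -iterS iterSr sK //.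
exact: n_min.
Qed.

Lemma parity_colour_first_hit {n x} :
  ~ M x -> first_hit n x -> parity_colour x = if odd n then 1%N else 2%N.
Proof.
move=> nMx xn; rewrite /parity_colour asboolF //.
case: asboolP => [[m /= om xm]|no_odd]; first by rewrite -(first_hit_unique xm xn) om.
by case: ifP => // on; case: no_odd; exists n.
Qed.

Lemma parity_colour_eq3 x : parity_colour x = 3%N -> M x.
Proof. by rewrite /parity_colour; case: asboolP => // _; case: ifP. Qed.

Lemma parity_colour_range x :
  parity_colour x = 1%N \/ parity_colour x = 2%N \/ parity_colour x = 3%N.
Proof. by rewrite /parity_colour; do !case: ifP => _; auto. Qed.

Lemma parity_colour_proper x : parity_colour x <> parity_colour (s x).
Proof.
have col3 y : M y -> parity_colour y = 3%N by move=> My; rewrite /parity_colour asboolT.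
have [Mx|nMx] := pselect (M x).
  by rewrite col3 // /parity_colour asboolF; [case: ifP | exact: M_indep].
have [Msx|nMsx] := pselect (M (s x)).
  by rewrite (col3 _ Msx) /parity_colour asboolF //; case: ifP.
have [n xn] := first_hit_exists x.
rewrite (parity_colour_first_hit nMx xn).
rewrite (parity_colour_first_hit nMsx (first_hit_succ nMsx xn)) /=.
by case: odd.
Qed.

End parity_colouring.

Section Borel_constructions.
Variables (X : topologicalType) (s t : X -> X) (B : nat -> set X) (W : set X).
Hypotheses (Bs : Borel_map s) (Bt : Borel_map t).
Hypotheses (BB : forall k, Borel (B k)) (BW : Borel W).

Lemma Borel_separating k : Borel (separating s t B k).
Proof.
have := BB k; have := Bs (BB k); have := Bt (BB k).
by move=> *; apply: sigma_setI; [apply: sigma_setI|]; try apply: sigma_setC.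
Qed.

Lemma Borel_least_separating n : Borel (least_separating s t B n).
Proof.
apply: sigma_setI; first exact: Borel_separating.
by apply: sigma_bigcap_in => m _; apply: sigma_setC; exact: Borel_separating.
Qed.

Lemma Borel_greedy n : Borel (greedy s t B W n).
Proof.
elim: n => [|n IH] /=; first exact: (@sigma_algebra0 _ setT open).
apply: sigma_setU => //; apply: sigma_setI; [apply: sigma_setI; [apply: sigma_setI|]|] => //.
- exact: Borel_least_separating.
- by apply: sigma_setC; exact: Bs.
- by apply: sigma_setC; exact: Bt.
Qed.

Lemma Borel_mis : Borel (mis s t B W).
Proof. by apply: (@sigma_algebra_bigcup _ setT open) => n; exact: Borel_greedy. Qed.

Lemma Borel_parity_colour M k : Borel M -> Borel (parity_colour t M @^-1` [set k]).
Proof.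
move=> BM; rewrite /parity_colour.
apply: (@sigma_preimage_if _ open) => //; first exact: (@sigma_preimage_cst _ open).
apply: (@sigma_preimage_if _ open); try exact: (@sigma_preimage_cst _ open).
apply: sigma_bigcup_in => n _; apply: sigma_setI; first exact: Borel_map_iter.
by apply: sigma_bigcap_in => m _; apply: sigma_setC; exact: Borel_map_iter.
Qed.

End Borel_constructions.

Section Z_action.
Variables (X : Type) (a : int -> X -> X).
Hypotheses (a0 : forall x, a 0 x = x) (aD : forall m n x, a (m + n) x = a m (a n x)).
Hypothesis a_free : forall n x, a n x = x -> n = 0.

Lemma act1K : cancel (a 1) (a (-1)).
Proof. by move=> x; rewrite -aD addNr a0. Qed.

Lemma actN1K : cancel (a (-1)) (a 1).
Proof. by move=> x; rewrite -aD addrN a0. Qed.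

Lemma act2_neq x : a 1 (a 1 x) <> x.
Proof. by rewrite -aD => /a_free. Qed.

Lemma iter_actN1 n x : iter n (a (-1)) x = a (- n%:Z) x.
Proof. by elim: n => [|n IH] /=; rewrite ?a0 // IH -aD intS opprD. Qed.

Lemma backward_ray_injective z : injective_ray a (fun n => iter n (a (-1)) z).
Proof.
split=> [i j|i]; last by right.
rewrite !iter_actN1 => /(congr1 (a j%:Z)); rewrite -!aD subrr a0 => /a_free/eqP.
by rewrite subr_eq0 eqz_nat => /eqP.
Qed.

Lemma separating_free_action (B : nat -> set X) :
  (forall x y1 y2, x <> y1 -> x <> y2 -> exists k, [/\ B k x, ~ B k y1 & ~ B k y2]) ->
  forall x, exists k, separating (a 1) (a (-1)) B k x.
Proof.
move=> sepB x; have a_neq n : n != 0 -> x <> a n x by move=> /eqP n0 /esym/a_free.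
by have [k [Bx Bsx Btx]] := sepB x _ _ (a_neq 1 isT) (a_neq (-1) isT); exists k.
Qed.

Lemma backward_ray_edges (V : set X) :
  (forall r, injective_ray a r ->
     forall N, exists i, (N <= i)%N /\ V (r i) /\ V (r i.+1)) ->
  forall z, exists2 n, (0 < n)%N & (V `&` a 1 @^-1` V) (iter n (a (-1)) z).
Proof.
move=> V_rays z; have [i [_ [Vi Vi1]]] := V_rays _ (backward_ray_injective z) 0.
by exists i.+1 => //; split => //=; rewrite actN1K.
Qed.

End Z_action.

Section edge_colouring.
Variables (X : Type) (a : int -> X -> X) (col : X -> nat).
Hypotheses (a1K : cancel (a 1) (a (-1))) (aN1K : cancel (a (-1)) (a 1)).
Hypothesis a2_neq : forall x, a 1 (a 1 x) <> x.

Definition edge_colour x y : nat := if `[< y = a 1 x >] then col x else col y.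

Lemma edge_colourP x y k : Gadj a x y /\ edge_colour x y = k <->
  (y = a 1 x /\ col x = k) \/ (x = a 1 y /\ col y = k).
Proof.
rewrite /edge_colour; split => [[[->|->]]|[[-> <-]|[-> <-]]].
- by rewrite asboolT //; left.
- rewrite asboolF => [<-|e]; first by right; rewrite aN1K.
  by apply: (@a2_neq x); rewrite -e aN1K.
- by rewrite asboolT //; split => //; left.
- split; first by right; rewrite a1K.
  by rewrite asboolF // => /esym; exact: a2_neq.
Qed.

Lemma edge_colour_coloring (K : set nat) :
  (forall x, col x <> col (a 1 x)) -> (forall x, K (col x)) ->
  edge_coloring a K edge_colour.
Proof.
move=> col_proper colK; split; [|split].
- move=> x y xy.
  by have /edge_colourP/or_comm/edge_colourP[_ ->] := conj xy (erefl (edge_colour x y)).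
- move=> x y xy; have /edge_colourP[[_ <-]|[_ <-]] := conj xy (erefl (edge_colour x y)).
    exact: (colK x).
  exact: (colK y).
- move=> x y z xy xz yz.
  have /edge_colourP[[ey <-]|[ex <-]] := conj xy (erefl (edge_colour x y));
  have /edge_colourP[[ez <-]|[ex' <-]] := conj xz (erefl (edge_colour x z)).
  + by move=> _; apply: yz; rewrite ey ez.
  + by rewrite ex'; apply/nesym/col_proper.
  + by rewrite ex; apply: col_proper.
  + by move=> _; apply: yz; rewrite -(a1K y) -(a1K z) -ex -ex'.
Qed.

End edge_colouring.

Lemma Borel_edge_colour (X : topologicalType) (a : int -> X -> X) (col : X -> nat)
    (B : nat -> set X) :
  cancel (a 1) (a (-1)) -> cancel (a (-1)) (a 1) -> (forall x, a 1 (a 1 x) <> x) ->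
  Borel_map (a 1) -> (forall k, Borel (B k)) ->
  (forall x y, x <> y -> exists k, B k x /\ ~ B k y) ->
  (forall k, Borel (col @^-1` [set k])) -> Borel_edge_coloring a (edge_colour a col).
Proof.
move=> a1K aN1K a2_neq Ba1 BB sepB Bcol k.
have Bid : Borel_map (@id X) by [].
have BT : Borel [set: X] := @sigma_setT _ open.
rewrite (_ : [set p | _] =
    ([set p | a 1 p.1 = id p.2] `&` (col @^-1` [set k] `*` setT)) `|`
    ([set p | id p.1 = a 1 p.2] `&` (setT `*` col @^-1` [set k]))).
  apply: sigma_setU; apply: sigma_setI; try exact: Borel2_setX.
    exact: Borel2_graph BB sepB Ba1 Bid.
  exact: Borel2_graph BB sepB Bid Ba1.
apply/seteqP; split => -[x y] /=.
  by rewrite edge_colourP // => -[[-> xk]|[-> yk]]; [left|right]; do !split.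
by move=> [[<- [xk _]]|[-> [_ yk]]]; apply/edge_colourP => //; [left|right].
Qed.

Theorem lemma2 (X : topologicalType) (a : int -> X -> X) (V : set X) :
  polish X -> free_Borel_Z_action a -> Borel V ->
  (forall r : nat -> X, injective_ray a r ->
     forall N : nat, exists i : nat, (N <= i)%N /\ V (r i) /\ V (r i.+1)) ->
  exists c : X -> X -> nat,
    edge_coloring a [set k | k = 1%N \/ k = 2%N \/ k = 3%N] c /\
    Borel_edge_coloring a c /\
    (forall x y, Gadj a x y -> c x y = 3%N -> V x /\ V y).
Proof.
move=> polX [a0 [aD [aBorel a_free]]] BV V_rays.
have a1K := act1K a0 aD; have aN1K := actN1K a0 aD.
have a2_neq := act2_neq aD a_free.
have [B [BB B_sep]] := polish_separating polX.
pose W := V `&` a 1 @^-1` V.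
pose M := mis (a 1) (a (-1)) B W.
pose col := parity_colour (a (-1)) M.
have W_back := backward_ray_edges a0 aD a_free V_rays.
have separating_nbrs := separating_free_action a_free B_sep.
have M_indep : forall x, M x -> ~ M (a 1 x) := mis_indep a1K.
have M_hit : forall z, exists n, M (iter n (a (-1)) z) :=
  mis_hits_backward_ray aN1K separating_nbrs W_back.
exists (edge_colour a col); split; [|split].
- apply: edge_colour_coloring => // x; last exact: parity_colour_range.
  exact: parity_colour_proper a1K M_indep M_hit x.
- apply: (Borel_edge_colour _ _ _ (aBorel 1) BB) => // [x y xy|k].
    by have [k [Bx By _]] := B_sep x y y xy xy; exists k.
  have BW : Borel W := sigma_setI BV (aBorel 1 _ BV).
  exact (Borel_parity_colour (aBorel (-1)) k (Borel_mis (aBorel 1) (aBorel (-1)) BB BW)).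
- move=> x y xy c3.
  case/(edge_colourP col a1K aN1K a2_neq): (conj xy c3).
    by move=> [-> cx]; exact: mis_sub (parity_colour_eq3 cx).
  by move=> [-> cy]; have [] := mis_sub (parity_colour_eq3 cy).
Qed.
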